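(* Let $f: B_1(0) \subseteq \mathbb{C} \to \mathbb{R}^3$ be a smooth conformal Willmore immersion with pull-back metric $g = f^*g_{euc} = e^{2u} g_{euc}$. Let $\nu$ be a smooth unit normal field along $f$, $h_{ij}$ the scalar second fundamental form with respect to $\nu$, $H = g^{ij}h_{ij}$ the scalar mean curvature, $h^0_{ij} = h_{ij} - \frac12 H g_{ij}$, and $\varphi := h^0_{11} - i\, h^0_{12}$. Then there is a smooth matrix-valued function $M: B_1(0) \to \mathbb{C}^{2\times 2}$ such that $$\partial_{\bar z} (\varphi, \partial_z H)^T = M \cdot (\varphi, \partial_z H)^T \quad \text{on } B_1(0).$$
   Context: Wirtinger derivatives: $\partial_z = \frac12(\partial_1 - i\partial_2)$, $\partial_{\bar z} = \frac12(\partial_1 + i \partial_2)$. The Willmore functional of an immersion $f$ of a surface into $\mathbb{R}^3$ is $\mathcal{W}(f) = \frac14 \int H^2\, d\mu_g$. A Willmore immersion is a critical point of $\mathcal{W}$; such an immersion satisfies the Euler–Lagrange equation $\Delta_g H + |A^0|_g^2 H = 0$, where $\Delta_g$ is the Laplace–Beltrami operator of $g$ and $A^0 = A - \frac12 \vec{H} g$ is the tracefree second fundamental form. *)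

From Stdlib Require Import Reals List.
From Coquelicot Require Import Coquelicot.
Open Scope R_scope.

(** Points of B_1(0) ⊂ C ≅ R^2 are written (x, y) with z = x + i y. *)
Definition in_disk (x y : R) : Prop := x ^ 2 + y ^ 2 < 1.

Definition pd1 (F : R -> R -> R) : R -> R -> R :=
  fun x y => Derive (fun t => F t y) x.
Definition pd2 (F : R -> R -> R) : R -> R -> R :=
  fun x y => Derive (fun t => F x t) y.

(** Iterated partial derivative: true = ∂_1, false = ∂_2. *)
Fixpoint iter_pd (l : list bool) (F : R -> R -> R) : R -> R -> R :=
  match l with
  | nil => F
  | b :: l' => (if b then pd1 else pd2) (iter_pd l' F)
  end.

Definition cont2_at (G : R -> R -> R) (x y : R) : Prop :=
  forall eps : R, 0 < eps -> exists delta : R, 0 < delta /\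
    forall x' y' : R, (x' - x) ^ 2 + (y' - y) ^ 2 < delta ^ 2 ->
      Rabs (G x' y' - G x y) < eps.

Definition smooth_disk (F : R -> R -> R) : Prop :=
  forall (l : list bool) (x y : R), in_disk x y ->
    cont2_at (iter_pd l F) x y /\
    ex_derive (fun t => iter_pd l F t y) x /\
    ex_derive (fun t => iter_pd l F x t) y.

Definition V3 := (R * R * R)%type.
Definition c1 (F : R -> R -> V3) : R -> R -> R := fun x y => fst (fst (F x y)).
Definition c2 (F : R -> R -> V3) : R -> R -> R := fun x y => snd (fst (F x y)).
Definition c3 (F : R -> R -> V3) : R -> R -> R := fun x y => snd (F x y).

Definition smooth_disk3 (F : R -> R -> V3) : Prop :=
  smooth_disk (c1 F) /\ smooth_disk (c2 F) /\ smooth_disk (c3 F).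

Definition pd1v (F : R -> R -> V3) : R -> R -> V3 :=
  fun x y => (pd1 (c1 F) x y, pd1 (c2 F) x y, pd1 (c3 F) x y).
Definition pd2v (F : R -> R -> V3) : R -> R -> V3 :=
  fun x y => (pd2 (c1 F) x y, pd2 (c2 F) x y, pd2 (c3 F) x y).

Definition dot3 (a b : V3) : R :=
  fst (fst a) * fst (fst b) + snd (fst a) * snd (fst b) + snd a * snd b.

Definition cre (F : R -> R -> C) : R -> R -> R := fun x y => fst (F x y).
Definition cim (F : R -> R -> C) : R -> R -> R := fun x y => snd (F x y).

Definition smooth_diskC (F : R -> R -> C) : Prop :=
  smooth_disk (cre F) /\ smooth_disk (cim F).

(** Wirtinger derivatives: ∂_z = (∂_1 - i ∂_2)/2, ∂_zbar = (∂_1 + i ∂_2)/2. *)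
Definition dz (F : R -> R -> C) : R -> R -> C :=
  fun x y => ((pd1 (cre F) x y + pd2 (cim F) x y) / 2,
              (pd1 (cim F) x y - pd2 (cre F) x y) / 2).
Definition dzbar (F : R -> R -> C) : R -> R -> C :=
  fun x y => ((pd1 (cre F) x y - pd2 (cim F) x y) / 2,
              (pd1 (cim F) x y + pd2 (cre F) x y) / 2).

Definition realC (F : R -> R -> R) : R -> R -> C := fun x y => (F x y, 0).

Definition conformal_with (f : R -> R -> V3) (u : R -> R -> R) : Prop :=
  forall x y, in_disk x y ->
    dot3 (pd1v f x y) (pd1v f x y) = exp (2 * u x y) /\
    dot3 (pd2v f x y) (pd2v f x y) = exp (2 * u x y) /\
    dot3 (pd1v f x y) (pd2v f x y) = 0.

Definition unit_normal (f nu : R -> R -> V3) : Prop :=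
  forall x y, in_disk x y ->
    dot3 (nu x y) (nu x y) = 1 /\
    dot3 (nu x y) (pd1v f x y) = 0 /\
    dot3 (nu x y) (pd2v f x y) = 0.

Definition h11 (f nu : R -> R -> V3) : R -> R -> R :=
  fun x y => dot3 (pd1v (pd1v f) x y) (nu x y).
Definition h12 (f nu : R -> R -> V3) : R -> R -> R :=
  fun x y => dot3 (pd2v (pd1v f) x y) (nu x y).
Definition h22 (f nu : R -> R -> V3) : R -> R -> R :=
  fun x y => dot3 (pd2v (pd2v f) x y) (nu x y).

(** Scalar mean curvature H = g^{ij} h_ij with g_ij = e^{2u} δ_ij. *)
Definition Hmean (f nu : R -> R -> V3) (u : R -> R -> R) : R -> R -> R :=
  fun x y => exp (- (2 * u x y)) * (h11 f nu x y + h22 f nu x y).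

Definition h0_11 f nu u : R -> R -> R :=
  fun x y => h11 f nu x y - / 2 * Hmean f nu u x y * exp (2 * u x y).
Definition h0_12 f nu (u : R -> R -> R) : R -> R -> R := h12 f nu.
Definition h0_22 f nu u : R -> R -> R :=
  fun x y => h22 f nu x y - / 2 * Hmean f nu u x y * exp (2 * u x y).

(** |A^0|_g^2 = g^{ik} g^{jl} h^0_ij h^0_kl. *)
Definition normA0sq f nu u : R -> R -> R :=
  fun x y => exp (- (4 * u x y)) *
    (h0_11 f nu u x y ^ 2 + 2 * h0_12 f nu u x y ^ 2 + h0_22 f nu u x y ^ 2).

(** Laplace–Beltrami of a scalar function for g = e^{2u} g_euc. *)
Definition lap_g (u F : R -> R -> R) : R -> R -> R :=
  fun x y => exp (- (2 * u x y)) * (pd1 (pd1 F) x y + pd2 (pd2 F) x y).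

Definition willmore_eq (f nu : R -> R -> V3) (u : R -> R -> R) : Prop :=
  forall x y, in_disk x y ->
    lap_g u (Hmean f nu u) x y + normA0sq f nu u x y * Hmean f nu u x y = 0.

Definition phi f nu u : R -> R -> C :=
  fun x y => (h0_11 f nu u x y, - h0_12 f nu u x y).

(** In conformal coordinates Codazzi's equations read
    ∂_1 h_22 - ∂_2 h_12 = u_1 (h_11 + h_22) and ∂_2 h_11 - ∂_1 h_12 = u_2 (h_11 + h_22),
    which is exactly ∂_zbar φ = ½ e^{2u} ∂_z H. They come from differentiating
    |∂_1 f|^2 = |∂_2 f|^2 = e^{2u}, ∂_1 f · ∂_2 f = 0, |ν|^2 = 1, ν · ∂_i f = 0 and expanding
    the resulting dot products in the orthogonal frame (∂_1 f, ∂_2 f, ν).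
    Since ∂_zbar ∂_z = Δ/4 on real functions and |A^0|_g^2 = 2 e^{-4u} |φ|^2, the Willmore
    equation becomes ∂_zbar ∂_z H = (-½ e^{-2u} H conj φ) φ.
    Hence M = [[0, ½ e^{2u}], [-½ e^{-2u} H conj φ, 0]]. *)

From Pilot Require Import Defs.
From Stdlib Require Import Reals List Lra Psatz.
From Coquelicot Require Import Coquelicot.
Open Scope R_scope.

Lemma in_disk_locally x y : in_disk x y -> locally_2d in_disk x y.
Proof.
  unfold in_disk; intros Hd.
  assert (Hx : -1 <= x <= 1) by (split; nra).
  assert (Hy : -1 <= y <= 1) by (split; nra).
  assert (Hr : 0 < (1 - (x ^ 2 + y ^ 2)) / 6) by lra.
  exists (mkposreal _ Hr); simpl; intros a b Ha Hb.
  apply Rabs_def2 in Ha; apply Rabs_def2 in Hb.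
  unfold in_disk; nra.
Qed.

Lemma cont2_at_continuity_2d_pt G x y : cont2_at G x y <-> continuity_2d_pt G x y.
Proof.
  split.
  - intros Hc eps. destruct (Hc eps (cond_pos eps)) as [d [Hd HG]].
    assert (Hd2 : 0 < d / 2) by lra.
    exists (mkposreal _ Hd2); simpl; intros a b Ha Hb. apply HG.
    apply Rabs_def2 in Ha; apply Rabs_def2 in Hb. nra.
  - intros Hc eps Heps. destruct (Hc (mkposreal eps Heps)) as [d HG].
    assert (Hd : 0 < d) by apply cond_pos.
    exists d; split; [exact Hd|]. intros a b Hab.
    assert (0 <= (a - x) ^ 2) by apply pow2_ge_0.
    assert (0 <= (b - y) ^ 2) by apply pow2_ge_0.
    apply HG; apply Rabs_def1; nra.
Qed.

Definition pd (b : bool) : (R -> R -> R) -> R -> R -> R := if b then pd1 else pd2.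

Definition eq_on_disk (F G : R -> R -> R) : Prop :=
  forall x y, in_disk x y -> F x y = G x y.

Lemma eq_on_disk_locally F G x y :
  eq_on_disk F G -> in_disk x y -> locally_2d (fun a b => F a b = G a b) x y.
Proof.
  intros H Hd. apply locally_2d_impl with (2 := in_disk_locally x y Hd).
  apply locally_2d_forall. exact H.
Qed.

Lemma eq_on_disk_pd b F G : eq_on_disk F G -> eq_on_disk (pd b F) (pd b G).
Proof.
  intros H x y Hd. assert (L := eq_on_disk_locally F G x y H Hd).
  destruct b; apply Derive_ext_loc;
    [exact (locally_2d_1d_const_y _ _ _ L) | exact (locally_2d_1d_const_x _ _ _ L)].
Qed.

Lemma iter_pd_app l1 l2 F : iter_pd (l1 ++ l2) F = iter_pd l1 (iter_pd l2 F).
Proof. induction l1 as [|b l IH]; simpl; congruence. Qed.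

Lemma smooth_disk_pd b F : smooth_disk F -> smooth_disk (pd b F).
Proof. intros H l. assert (Hl := H (l ++ b :: nil)). rewrite iter_pd_app in Hl. exact Hl. Qed.

Definition cont_derivable_at (F : R -> R -> R) (x y : R) : Prop :=
  continuity_2d_pt F x y /\ ex_derive (fun t => F t y) x /\ ex_derive (fun t => F x t) y.

Lemma smooth_disk_cont_derivable F x y :
  smooth_disk F -> in_disk x y -> cont_derivable_at F x y.
Proof.
  intros H Hd. destruct (H nil x y Hd) as [Hc Hder].
  split; [apply cont2_at_continuity_2d_pt|]; assumption.
Qed.

(* Closure of [smooth_disk] under the algebraic operations goes through this class,
   which the product and chain rules make stable under partial derivatives. *)
Inductive smooth_class : (R -> R -> R) -> Prop :=
  | smooth_class_of F : smooth_disk F -> smooth_class F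
  | smooth_class_const c : smooth_class (fun _ _ => c)
  | smooth_class_plus F G :
      smooth_class F -> smooth_class G -> smooth_class (fun x y => F x y + G x y)
  | smooth_class_mult F G :
      smooth_class F -> smooth_class G -> smooth_class (fun x y => F x y * G x y)
  | smooth_class_exp F : smooth_class F -> smooth_class (fun x y => exp (F x y))
  | smooth_class_eq F G : eq_on_disk F G -> smooth_class G -> smooth_class F.

Lemma smooth_class_cont_derivable F x y :
  smooth_class F -> in_disk x y -> cont_derivable_at F x y.
Proof.
  intros HF; revert x y; induction HF as [F HF|c|F G _ IHF _ IHG|F G _ IHF _ IHG|F _ IHF|F G HFG _ IHG];
    intros x y Hd.
  - apply smooth_disk_cont_derivable; assumption.
  - split; [apply continuity_2d_pt_const | split; apply ex_derive_const].
  - destruct (IHF x y Hd) as (CF & DF1 & DF2), (IHG x y Hd) as (CG & DG1 & DG2).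
    split; [apply continuity_2d_pt_plus; assumption | split; auto_derive; auto].
  - destruct (IHF x y Hd) as (CF & DF1 & DF2), (IHG x y Hd) as (CG & DG1 & DG2).
    split; [apply continuity_2d_pt_mult; assumption | split; auto_derive; auto].
  - destruct (IHF x y Hd) as (CF & DF1 & DF2).
    split; [apply continuity_1d_2d_pt_comp; [apply derivable_continuous_pt, derivable_pt_exp | assumption]|].
    split; auto_derive; auto.
  - assert (L := eq_on_disk_locally G F x y (fun a b h => eq_sym (HFG a b h)) Hd).
    destruct (IHG x y Hd) as (CG & DG1 & DG2). split; [|split].
    + exact (continuity_2d_pt_ext_loc _ _ _ _ L CG).
    + exact (ex_derive_ext_loc _ _ _ (locally_2d_1d_const_y _ _ _ L) DG1).
    + exact (ex_derive_ext_loc _ _ _ (locally_2d_1d_const_x _ _ _ L) DG2).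
Qed.

Lemma smooth_class_pd b F : smooth_class F -> smooth_class (pd b F).
Proof.
  intros HF; induction HF as [F HF|c|F G HF IHF HG IHG|F G HF IHF HG IHG|F HF IHF|F G HFG _ IHG].
  - apply smooth_class_of, smooth_disk_pd; assumption.
  - apply smooth_class_eq with (G := fun _ _ => 0); [|apply smooth_class_const].
    intros x y _; destruct b; unfold pd, pd1, pd2; apply Derive_const.
  - apply smooth_class_eq with (G := fun x y => pd b F x y + pd b G x y);
      [|apply smooth_class_plus; assumption].
    intros x y Hd.
    destruct (smooth_class_cont_derivable F x y HF Hd) as (_ & DF1 & DF2),
      (smooth_class_cont_derivable G x y HG Hd) as (_ & DG1 & DG2).
    destruct b; unfold pd, pd1, pd2; apply Derive_plus; assumption.
  - apply smooth_class_eq with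
      (G := fun x y => pd b F x y * G x y + F x y * pd b G x y);
      [|apply smooth_class_plus; apply smooth_class_mult; assumption].
    intros x y Hd.
    destruct (smooth_class_cont_derivable F x y HF Hd) as (_ & DF1 & DF2),
      (smooth_class_cont_derivable G x y HG Hd) as (_ & DG1 & DG2).
    destruct b; unfold pd, pd1, pd2; apply is_derive_unique; auto_derive; auto; ring.
  - apply smooth_class_eq with (G := fun x y => pd b F x y * exp (F x y));
      [|apply smooth_class_mult; [|apply smooth_class_exp]; assumption].
    intros x y Hd.
    destruct (smooth_class_cont_derivable F x y HF Hd) as (_ & DF1 & DF2).
    destruct b; unfold pd, pd1, pd2; apply is_derive_unique; auto_derive; auto; ring.
  - apply smooth_class_eq with (G := pd b G); [apply eq_on_disk_pd|]; assumption.
Qed.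

Lemma smooth_class_smooth_disk F : smooth_class F -> smooth_disk F.
Proof.
  intros HF l x y Hd.
  assert (Hl : smooth_class (iter_pd l F)).
  { induction l as [|b l IH]; [exact HF | exact (smooth_class_pd b _ IH)]. }
  destruct (smooth_class_cont_derivable _ x y Hl Hd) as (C & D1 & D2).
  split; [apply cont2_at_continuity_2d_pt|]; auto.
Qed.

Lemma smooth_disk_const c : smooth_disk (fun _ _ => c).
Proof. apply smooth_class_smooth_disk, smooth_class_const. Qed.

Lemma smooth_disk_plus F G :
  smooth_disk F -> smooth_disk G -> smooth_disk (fun x y => F x y + G x y).
Proof. intros; apply smooth_class_smooth_disk, smooth_class_plus; apply smooth_class_of; assumption. Qed.

Lemma smooth_disk_mult F G :
  smooth_disk F -> smooth_disk G -> smooth_disk (fun x y => F x y * G x y).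
Proof. intros; apply smooth_class_smooth_disk, smooth_class_mult; apply smooth_class_of; assumption. Qed.

Lemma smooth_disk_exp F : smooth_disk F -> smooth_disk (fun x y => exp (F x y)).
Proof. intros; apply smooth_class_smooth_disk, smooth_class_exp, smooth_class_of; assumption. Qed.

Lemma smooth_disk_opp F : smooth_disk F -> smooth_disk (fun x y => - F x y).
Proof.
  intros HF. apply smooth_class_smooth_disk, smooth_class_eq with (G := fun x y => -1 * F x y).
  - intros x y _; ring.
  - apply smooth_class_mult; [apply smooth_class_const | apply smooth_class_of, HF].
Qed.

Lemma smooth_disk_minus F G :
  smooth_disk F -> smooth_disk G -> smooth_disk (fun x y => F x y - G x y).
Proof. intros; apply smooth_disk_plus, smooth_disk_opp; assumption. Qed.

Ltac smooth_disk_tac :=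
  repeat first
    [ assumption | apply smooth_disk_const | apply smooth_disk_plus | apply smooth_disk_minus
    | apply smooth_disk_mult | apply smooth_disk_exp | apply smooth_disk_opp ].

Lemma smooth_disk3_pd1v g : smooth_disk3 g -> smooth_disk3 (pd1v g).
Proof. intros (H1 & H2 & H3); split; [|split]; apply (smooth_disk_pd true); assumption. Qed.

Lemma smooth_disk3_pd2v g : smooth_disk3 g -> smooth_disk3 (pd2v g).
Proof. intros (H1 & H2 & H3); split; [|split]; apply (smooth_disk_pd false); assumption. Qed.

Lemma smooth_disk_dot3 a b :
  smooth_disk3 a -> smooth_disk3 b -> smooth_disk (fun x y => dot3 (a x y) (b x y)).
Proof. intros (A1 & A2 & A3) (B1 & B2 & B3); unfold dot3; smooth_disk_tac. Qed.

Lemma smooth_disk_ex_derive1 F x y : smooth_disk F -> in_disk x y -> ex_derive (fun t => F t y) x.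
Proof. intros H Hd; apply (H nil x y Hd). Qed.

Lemma smooth_disk_ex_derive2 F x y : smooth_disk F -> in_disk x y -> ex_derive (fun t => F x t) y.
Proof. intros H Hd; apply (H nil x y Hd). Qed.

Lemma smooth_disk_pd1_pd2 F :
  smooth_disk F -> eq_on_disk (pd1 (pd2 F)) (pd2 (pd1 F)).
Proof.
  intros H x y Hd. apply Schwarz.
  - apply locally_2d_impl with (2 := in_disk_locally x y Hd), locally_2d_forall.
    intros a b Hab. repeat split.
    + apply (H nil a b Hab).
    + apply (H nil a b Hab).
    + apply (H (false :: nil) a b Hab).
    + apply (H (true :: nil) a b Hab).
  - apply cont2_at_continuity_2d_pt, (H (true :: false :: nil) x y Hd).
  - apply cont2_at_continuity_2d_pt, (H (false :: true :: nil) x y Hd).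
Qed.

Lemma smooth_disk3_pd1v_pd2v g x y :
  smooth_disk3 g -> in_disk x y -> pd1v (pd2v g) x y = pd2v (pd1v g) x y.
Proof.
  intros (H1 & H2 & H3) Hd. unfold pd1v, pd2v.
  f_equal; [f_equal|]; apply smooth_disk_pd1_pd2; assumption.
Qed.

Lemma smooth_disk_pd1_pd2_pd2 F :
  smooth_disk F -> eq_on_disk (pd1 (pd2 (pd2 F))) (pd2 (pd2 (pd1 F))).
Proof.
  intros H x y Hd. rewrite smooth_disk_pd1_pd2 by (try apply (smooth_disk_pd false); assumption).
  exact (eq_on_disk_pd false _ _ (smooth_disk_pd1_pd2 F H) x y Hd).
Qed.

Lemma smooth_disk3_pd1v_pd2v_pd2v g x y :
  smooth_disk3 g -> in_disk x y -> pd1v (pd2v (pd2v g)) x y = pd2v (pd2v (pd1v g)) x y.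
Proof.
  intros (H1 & H2 & H3) Hd. unfold pd1v, pd2v.
  f_equal; [f_equal|]; apply smooth_disk_pd1_pd2_pd2; assumption.
Qed.

Lemma Derive_dot3_components (a1 a2 a3 b1 b2 b3 : R -> R) t :
  ex_derive a1 t -> ex_derive a2 t -> ex_derive a3 t ->
  ex_derive b1 t -> ex_derive b2 t -> ex_derive b3 t ->
  Derive (fun s => dot3 (a1 s, a2 s, a3 s) (b1 s, b2 s, b3 s)) t =
  dot3 (Derive a1 t, Derive a2 t, Derive a3 t) (b1 t, b2 t, b3 t) +
  dot3 (a1 t, a2 t, a3 t) (Derive b1 t, Derive b2 t, Derive b3 t).
Proof.
  intros; unfold dot3; simpl.
  rewrite !Derive_plus, !Derive_mult by (auto_derive; auto). ring.
Qed.

Lemma pd1_dot3 a b x y : smooth_disk3 a -> smooth_disk3 b -> in_disk x y ->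
  pd1 (fun x y => dot3 (a x y) (b x y)) x y =
  dot3 (pd1v a x y) (b x y) + dot3 (a x y) (pd1v b x y).
Proof.
  intros (A1 & A2 & A3) (B1 & B2 & B3) Hd.
  apply (Derive_dot3_components (fun t => Defs.c1 a t y) (fun t => c2 a t y) (fun t => c3 a t y)
    (fun t => Defs.c1 b t y) (fun t => c2 b t y) (fun t => c3 b t y));
    apply smooth_disk_ex_derive1; assumption.
Qed.

Lemma pd2_dot3 a b x y : smooth_disk3 a -> smooth_disk3 b -> in_disk x y ->
  pd2 (fun x y => dot3 (a x y) (b x y)) x y =
  dot3 (pd2v a x y) (b x y) + dot3 (a x y) (pd2v b x y).
Proof.
  intros (A1 & A2 & A3) (B1 & B2 & B3) Hd.
  apply (Derive_dot3_components (fun t => Defs.c1 a x t) (fun t => c2 a x t) (fun t => c3 a x t)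
    (fun t => Defs.c1 b x t) (fun t => c2 b x t) (fun t => c3 b x t));
    apply smooth_disk_ex_derive2; assumption.
Qed.

Lemma pd1_dot3_eq_on_disk a b G x y :
  smooth_disk3 a -> smooth_disk3 b -> eq_on_disk (fun x y => dot3 (a x y) (b x y)) G ->
  in_disk x y -> dot3 (pd1v a x y) (b x y) + dot3 (a x y) (pd1v b x y) = pd1 G x y.
Proof. intros Ha Hb HG Hd; rewrite <- pd1_dot3 by assumption; exact (eq_on_disk_pd true _ _ HG x y Hd). Qed.

Lemma pd2_dot3_eq_on_disk a b G x y :
  smooth_disk3 a -> smooth_disk3 b -> eq_on_disk (fun x y => dot3 (a x y) (b x y)) G ->
  in_disk x y -> dot3 (pd2v a x y) (b x y) + dot3 (a x y) (pd2v b x y) = pd2 G x y.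
Proof. intros Ha Hb HG Hd; rewrite <- pd2_dot3 by assumption; exact (eq_on_disk_pd false _ _ HG x y Hd). Qed.

Lemma pd1_const c x y : pd1 (fun _ _ => c) x y = 0.
Proof. unfold pd1; apply Derive_const. Qed.

Lemma pd2_const c x y : pd2 (fun _ _ => c) x y = 0.
Proof. unfold pd2; apply Derive_const. Qed.

Lemma pd1_exp_scal k U x y : ex_derive (fun t => U t y) x ->
  pd1 (fun a b => exp (k * U a b)) x y = k * pd1 U x y * exp (k * U x y).
Proof. intros H; unfold pd1; apply is_derive_unique; auto_derive; [exact H | ring]. Qed.

Lemma pd2_exp_scal k U x y : ex_derive (fun t => U x t) y ->
  pd2 (fun a b => exp (k * U a b)) x y = k * pd2 U x y * exp (k * U x y).
Proof. intros H; unfold pd2; apply is_derive_unique; auto_derive; [exact H | ring]. Qed.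

Lemma dot3_comm a b : dot3 a b = dot3 b a.
Proof. unfold dot3; ring. Qed.

Definition det3 a b c d e f g h i : R := a * (e * i - f * h) - b * (d * i - f * g) + c * (d * h - e * g).

Definition det4 m11 m12 m13 m14 m21 m22 m23 m24 m31 m32 m33 m34 m41 m42 m43 m44 : R :=
  m11 * det3 m22 m23 m24 m32 m33 m34 m42 m43 m44
  - m12 * det3 m21 m23 m24 m31 m33 m34 m41 m43 m44
  + m13 * det3 m21 m22 m24 m31 m32 m34 m41 m42 m44
  - m14 * det3 m21 m22 m23 m31 m32 m33 m41 m42 m43.

(* The matrix is the product of the 4x3 matrix with rows a, b, c, w and the 3x4 matrix
   with columns a, b, c, v, so its rank is at most 3. *)
Lemma det4_dot3_eq0 (a b c w v : V3) :
  det4 (dot3 a a) (dot3 a b) (dot3 a c) (dot3 a v)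
       (dot3 b a) (dot3 b b) (dot3 b c) (dot3 b v)
       (dot3 c a) (dot3 c b) (dot3 c c) (dot3 c v)
       (dot3 w a) (dot3 w b) (dot3 w c) (dot3 w v) = 0.
Proof.
  destruct a as [[a1 a2] a3], b as [[b1 b2] b3], c as [[c1 c2] c3],
    w as [[w1 w2] w3], v as [[v1 v2] v3].
  unfold det4, det3, dot3; simpl; ring.
Qed.

Lemma dot3_orthogonal_frame (a b c w v : V3) E :
  0 < E -> dot3 a a = E -> dot3 b b = E -> dot3 c c = 1 ->
  dot3 a b = 0 -> dot3 a c = 0 -> dot3 b c = 0 ->
  dot3 w v = dot3 w a * dot3 v a / E + dot3 w b * dot3 v b / E + dot3 w c * dot3 v c.
Proof.
  intros HE Ha Hb Hc Hab Hac Hbc.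
  assert (K := det4_dot3_eq0 a b c w v).
  rewrite (dot3_comm b a), (dot3_comm c a), (dot3_comm c b), (dot3_comm a v),
    (dot3_comm b v), (dot3_comm c v), Ha, Hb, Hc, Hab, Hac, Hbc in K.
  unfold det4, det3 in K.
  apply (Rmult_eq_reg_l (E * E)); [field_simplify; [nra | lra] | nra].
Qed.

Lemma dz_realC F x y : dz (realC F) x y = (pd1 F x y / 2, - pd2 F x y / 2).
Proof.
  unfold dz, realC, cre, cim, pd1, pd2; simpl.
  rewrite !Derive_const. f_equal; field.
Qed.

Lemma pd1_ext F G x y : (forall a b, F a b = G a b) -> pd1 F x y = pd1 G x y.
Proof. intros H; unfold pd1; apply Derive_ext; auto. Qed.

Lemma pd2_ext F G x y : (forall a b, F a b = G a b) -> pd2 F x y = pd2 G x y.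
Proof. intros H; unfold pd2; apply Derive_ext; auto. Qed.

Lemma pd1_scal k F x y : pd1 (fun a b => k * F a b) x y = k * pd1 F x y.
Proof. apply Derive_scal. Qed.

Lemma pd2_scal k F x y : pd2 (fun a b => k * F a b) x y = k * pd2 F x y.
Proof. apply Derive_scal. Qed.

Lemma dzbar_dz_realC F x y : smooth_disk F -> in_disk x y ->
  dzbar (dz (realC F)) x y = ((pd1 (pd1 F) x y + pd2 (pd2 F) x y) / 4, 0).
Proof.
  intros HF Hd.
  assert (Re : forall a b, cre (dz (realC F)) a b = / 2 * pd1 F a b)
    by (intros a b; unfold cre; rewrite dz_realC; simpl; field).
  assert (Im : forall a b, cim (dz (realC F)) a b = - / 2 * pd2 F a b)
    by (intros a b; unfold cim; rewrite dz_realC; simpl; field).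
  unfold dzbar.
  rewrite (pd1_ext _ _ x y Re), (pd2_ext _ _ x y Re), (pd1_ext _ _ x y Im), (pd2_ext _ _ x y Im).
  rewrite !pd1_scal, !pd2_scal, (smooth_disk_pd1_pd2 F HF x y Hd).
  f_equal; field.
Qed.

Section ConformalImmersion.

Variables (f nu : R -> R -> V3) (u : R -> R -> R).
Hypotheses (Hf : smooth_disk3 f) (Hu : smooth_disk u) (Hconf : conformal_with f u)
  (Hnu : smooth_disk3 nu) (Hnormal : unit_normal f nu).

Let Hf1 := smooth_disk3_pd1v f Hf.
Let Hf2 := smooth_disk3_pd2v f Hf.
Let Hf11 := smooth_disk3_pd1v _ Hf1.
Let Hf12 := smooth_disk3_pd2v _ Hf1.
Let Hf22 := smooth_disk3_pd2v _ Hf2.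

Lemma conformal_second_derivatives x y : in_disk x y ->
  let E := exp (2 * u x y) in
  dot3 (pd1v (pd1v f) x y) (pd1v f x y) = pd1 u x y * E /\
  dot3 (pd2v (pd1v f) x y) (pd1v f x y) = pd2 u x y * E /\
  dot3 (pd2v (pd1v f) x y) (pd2v f x y) = pd1 u x y * E /\
  dot3 (pd2v (pd2v f) x y) (pd2v f x y) = pd2 u x y * E /\
  dot3 (pd1v (pd1v f) x y) (pd2v f x y) = - (pd2 u x y * E) /\
  dot3 (pd2v (pd2v f) x y) (pd1v f x y) = - (pd1 u x y * E).
Proof.
  intros Hd E.
  assert (E11 : eq_on_disk (fun a b => dot3 (pd1v f a b) (pd1v f a b)) (fun a b => exp (2 * u a b)))
    by (intros a b h; apply (Hconf a b h)).
  assert (E22 : eq_on_disk (fun a b => dot3 (pd2v f a b) (pd2v f a b)) (fun a b => exp (2 * u a b)))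
    by (intros a b h; apply (Hconf a b h)).
  assert (E12 : eq_on_disk (fun a b => dot3 (pd1v f a b) (pd2v f a b)) (fun _ _ => 0))
    by (intros a b h; apply (Hconf a b h)).
  assert (K1 := pd1_dot3_eq_on_disk _ _ _ x y Hf1 Hf1 E11 Hd).
  assert (K2 := pd2_dot3_eq_on_disk _ _ _ x y Hf1 Hf1 E11 Hd).
  assert (K3 := pd1_dot3_eq_on_disk _ _ _ x y Hf2 Hf2 E22 Hd).
  assert (K4 := pd2_dot3_eq_on_disk _ _ _ x y Hf2 Hf2 E22 Hd).
  assert (K5 := pd1_dot3_eq_on_disk _ _ _ x y Hf1 Hf2 E12 Hd).
  assert (K6 := pd2_dot3_eq_on_disk _ _ _ x y Hf1 Hf2 E12 Hd).
  rewrite pd1_exp_scal in K1, K3 by (apply smooth_disk_ex_derive1; assumption).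
  rewrite pd2_exp_scal in K2, K4 by (apply smooth_disk_ex_derive2; assumption).
  rewrite pd1_const in K5; rewrite pd2_const in K6.
  rewrite (smooth_disk3_pd1v_pd2v f x y Hf Hd) in K3, K5.
  rewrite !(dot3_comm (pd1v f x y)), !(dot3_comm (pd2v f x y)) in *.
  fold E in K1, K2, K3, K4.
  repeat split; lra.
Qed.

Lemma unit_normal_derivatives x y : in_disk x y ->
  dot3 (pd1v nu x y) (nu x y) = 0 /\ dot3 (pd2v nu x y) (nu x y) = 0 /\
  dot3 (pd1v nu x y) (pd1v f x y) = - h11 f nu x y /\
  dot3 (pd2v nu x y) (pd1v f x y) = - h12 f nu x y /\
  dot3 (pd1v nu x y) (pd2v f x y) = - h12 f nu x y /\
  dot3 (pd2v nu x y) (pd2v f x y) = - h22 f nu x y.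
Proof.
  intros Hd.
  assert (Enn : eq_on_disk (fun a b => dot3 (nu a b) (nu a b)) (fun _ _ => 1))
    by (intros a b h; apply (Hnormal a b h)).
  assert (En1 : eq_on_disk (fun a b => dot3 (nu a b) (pd1v f a b)) (fun _ _ => 0))
    by (intros a b h; apply (Hnormal a b h)).
  assert (En2 : eq_on_disk (fun a b => dot3 (nu a b) (pd2v f a b)) (fun _ _ => 0))
    by (intros a b h; apply (Hnormal a b h)).
  assert (N1 := pd1_dot3_eq_on_disk _ _ _ x y Hnu Hnu Enn Hd).
  assert (N2 := pd2_dot3_eq_on_disk _ _ _ x y Hnu Hnu Enn Hd).
  assert (N3 := pd1_dot3_eq_on_disk _ _ _ x y Hnu Hf1 En1 Hd).
  assert (N4 := pd2_dot3_eq_on_disk _ _ _ x y Hnu Hf1 En1 Hd).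
  assert (N5 := pd1_dot3_eq_on_disk _ _ _ x y Hnu Hf2 En2 Hd).
  assert (N6 := pd2_dot3_eq_on_disk _ _ _ x y Hnu Hf2 En2 Hd).
  rewrite pd1_const in N1, N3, N5; rewrite pd2_const in N2, N4, N6.
  rewrite (smooth_disk3_pd1v_pd2v f x y Hf Hd) in N5.
  unfold h11, h12, h22.
  rewrite !(dot3_comm (nu x y)) in *.
  repeat split; lra.
Qed.

Lemma codazzi x y : in_disk x y ->
  pd1 (h22 f nu) x y - pd2 (h12 f nu) x y = pd1 u x y * (h11 f nu x y + h22 f nu x y) /\
  pd2 (h11 f nu) x y - pd1 (h12 f nu) x y = pd2 u x y * (h11 f nu x y + h22 f nu x y).
Proof.
  intros Hd.
  destruct (conformal_second_derivatives x y Hd) as (C1 & C2 & C3 & C4 & C5 & C6).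
  destruct (unit_normal_derivatives x y Hd) as (N1 & N2 & N3 & N4 & N5 & N6).
  destruct (Hconf x y Hd) as (F11 & F22 & F12), (Hnormal x y Hd) as (Nn & Nf1 & Nf2).
  rewrite dot3_comm in Nf1, Nf2.
  assert (HE : 0 < exp (2 * u x y)) by apply exp_pos.
  assert (Frame := fun w v => dot3_orthogonal_frame _ _ _ w v _ HE F11 F22 Nn F12 Nf1 Nf2).
  rewrite (pd1_dot3 (pd2v (pd2v f)) nu), (pd2_dot3 (pd2v (pd1v f)) nu),
    (pd2_dot3 (pd1v (pd1v f)) nu), (pd1_dot3 (pd2v (pd1v f)) nu) by assumption.
  (* the third-order terms cancel *)
  rewrite (smooth_disk3_pd1v_pd2v_pd2v f x y Hf Hd), <- (smooth_disk3_pd1v_pd2v (pd1v f) x y Hf1 Hd).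
  rewrite (Frame (pd2v (pd2v f) x y) (pd1v nu x y)), (Frame (pd2v (pd1v f) x y) (pd2v nu x y)),
    (Frame (pd1v (pd1v f) x y) (pd2v nu x y)), (Frame (pd2v (pd1v f) x y) (pd1v nu x y)).
  rewrite C1, C2, C3, C4, C5, C6, N1, N2, N3, N4, N5, N6.
  split; field; lra.
Qed.

Lemma smooth_disk_h11 : smooth_disk (h11 f nu).
Proof. exact (smooth_disk_dot3 _ _ Hf11 Hnu). Qed.

Lemma smooth_disk_h12 : smooth_disk (h12 f nu).
Proof. exact (smooth_disk_dot3 _ _ Hf12 Hnu). Qed.

Lemma smooth_disk_h22 : smooth_disk (h22 f nu).
Proof. exact (smooth_disk_dot3 _ _ Hf22 Hnu). Qed.

Lemma smooth_disk_Hmean : smooth_disk (Hmean f nu u).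
Proof.
  assert (H11 := smooth_disk_h11). assert (H22 := smooth_disk_h22).
  unfold Hmean; smooth_disk_tac.
Qed.

Lemma h0_11_eq x y : h0_11 f nu u x y = (h11 f nu x y - h22 f nu x y) / 2.
Proof.
  unfold h0_11, Hmean. rewrite exp_Ropp. field. apply Rgt_not_eq, exp_pos.
Qed.

Lemma pd1_Hmean x y : in_disk x y ->
  pd1 (Hmean f nu u) x y = exp (- (2 * u x y)) *
    (pd1 (h11 f nu) x y + pd1 (h22 f nu) x y - 2 * pd1 u x y * (h11 f nu x y + h22 f nu x y)).
Proof.
  intros Hd. assert (H11 := smooth_disk_h11). assert (H22 := smooth_disk_h22).
  unfold Hmean, pd1; apply is_derive_unique; auto_derive;
    [repeat split; apply smooth_disk_ex_derive1; assumption | ring].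
Qed.

Lemma pd2_Hmean x y : in_disk x y ->
  pd2 (Hmean f nu u) x y = exp (- (2 * u x y)) *
    (pd2 (h11 f nu) x y + pd2 (h22 f nu) x y - 2 * pd2 u x y * (h11 f nu x y + h22 f nu x y)).
Proof.
  intros Hd. assert (H11 := smooth_disk_h11). assert (H22 := smooth_disk_h22).
  unfold Hmean, pd2; apply is_derive_unique; auto_derive;
    [repeat split; apply smooth_disk_ex_derive2; assumption | ring].
Qed.

Lemma dzbar_phi x y : in_disk x y ->
  dzbar (phi f nu u) x y = Cmult (exp (2 * u x y) / 2, 0) (dz (realC (Hmean f nu u)) x y).
Proof.
  intros Hd. assert (H11 := smooth_disk_h11). assert (H22 := smooth_disk_h22).
  assert (Re : forall a b, cre (phi f nu u) a b = (h11 f nu a b - h22 f nu a b) / 2)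
    by (intros a b; apply h0_11_eq).
  assert (Im : forall a b, cim (phi f nu u) a b = -1 * h12 f nu a b)
    by (intros a b; unfold cim, phi, h0_12; simpl; ring).
  assert (Re1 : pd1 (cre (phi f nu u)) x y = (pd1 (h11 f nu) x y - pd1 (h22 f nu) x y) / 2).
  { rewrite (pd1_ext _ _ x y Re); unfold pd1; apply is_derive_unique; auto_derive;
      [repeat split; apply smooth_disk_ex_derive1; assumption | field]. }
  assert (Re2 : pd2 (cre (phi f nu u)) x y = (pd2 (h11 f nu) x y - pd2 (h22 f nu) x y) / 2).
  { rewrite (pd2_ext _ _ x y Re); unfold pd2; apply is_derive_unique; auto_derive;
      [repeat split; apply smooth_disk_ex_derive2; assumption | field]. }
  destruct (codazzi x y Hd) as [Cod1 Cod2].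
  assert (HE : exp (2 * u x y) <> 0) by apply Rgt_not_eq, exp_pos.
  assert (Q1 : pd2 (h12 f nu) x y =
    pd1 (h22 f nu) x y - pd1 u x y * (h11 f nu x y + h22 f nu x y)) by lra.
  assert (Q2 : pd1 (h12 f nu) x y =
    pd2 (h11 f nu) x y - pd2 u x y * (h11 f nu x y + h22 f nu x y)) by lra.
  unfold dzbar. rewrite dz_realC, pd1_Hmean, pd2_Hmean, Re1, Re2 by assumption.
  rewrite (pd1_ext _ _ x y Im), (pd2_ext _ _ x y Im), pd1_scal, pd2_scal, Q1, Q2, exp_Ropp.
  unfold Cmult; simpl; f_equal; field; exact HE.
Qed.

Lemma h0_22_eq x y : h0_22 f nu u x y = - h0_11 f nu u x y.
Proof.
  unfold h0_22; rewrite h0_11_eq; unfold Hmean; rewrite exp_Ropp.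
  field; apply Rgt_not_eq, exp_pos.
Qed.

Lemma willmore_laplacian x y : willmore_eq f nu u -> in_disk x y ->
  pd1 (pd1 (Hmean f nu u)) x y + pd2 (pd2 (Hmean f nu u)) x y =
  - 2 * exp (- (2 * u x y)) * (h0_11 f nu u x y ^ 2 + h12 f nu x y ^ 2) * Hmean f nu u x y.
Proof.
  intros Hw Hd. assert (W := Hw x y Hd).
  unfold lap_g, normA0sq in W. rewrite h0_22_eq in W. unfold h0_12 in W.
  replace (exp (- (4 * u x y))) with (exp (- (2 * u x y)) * exp (- (2 * u x y))) in W
    by (rewrite <- exp_plus; f_equal; ring).
  assert (HE : 0 < exp (- (2 * u x y))) by apply exp_pos.
  apply (Rmult_eq_reg_l (exp (- (2 * u x y)))); [nra | lra].
Qed.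
End ConformalImmersion.

Theorem proposition2p2 (f nu : R -> R -> V3) (u : R -> R -> R) :
  smooth_disk3 f -> smooth_disk u -> conformal_with f u ->
  smooth_disk3 nu -> unit_normal f nu ->
  willmore_eq f nu u ->
  exists M11 M12 M21 M22 : R -> R -> C,
    smooth_diskC M11 /\ smooth_diskC M12 /\
    smooth_diskC M21 /\ smooth_diskC M22 /\
    forall x y : R, in_disk x y ->
      dzbar (phi f nu u) x y =
        Cplus (Cmult (M11 x y) (phi f nu u x y))
              (Cmult (M12 x y) (dz (realC (Hmean f nu u)) x y)) /\
      dzbar (dz (realC (Hmean f nu u))) x y =
        Cplus (Cmult (M21 x y) (phi f nu u x y))
              (Cmult (M22 x y) (dz (realC (Hmean f nu u)) x y)).
Proof.
  intros Hf Hu Hconf Hnu Hnormal Hw.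
  assert (SH : smooth_disk (Hmean f nu u)) by (apply smooth_disk_Hmean; assumption).
  assert (S11 : smooth_disk (h11 f nu)) by (apply smooth_disk_h11; assumption).
  assert (S12 : smooth_disk (h12 f nu)) by (apply smooth_disk_h12; assumption).
  assert (S22 : smooth_disk (h22 f nu)) by (apply smooth_disk_h22; assumption).
  exists (fun _ _ => (0, 0)), (fun x y => (exp (2 * u x y) / 2, 0)),
    (fun x y => (- / 2 * exp (- (2 * u x y)) * Hmean f nu u x y * h0_11 f nu u x y,
                 - / 2 * exp (- (2 * u x y)) * Hmean f nu u x y * h12 f nu x y)),
    (fun _ _ => (0, 0)).
  split; [|split; [|split; [|split]]];
    [split; unfold cre, cim, h0_11; simpl; smooth_disk_tac .. | intros x y Hd; split].
  - rewrite dzbar_phi by assumption. unfold Cplus, Cmult; simpl; f_equal; ring.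
  - rewrite dzbar_dz_realC, willmore_laplacian by assumption.
    unfold Cplus, Cmult, phi, h0_12; simpl; f_equal; field.
Qed.
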